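(* Let $\alpha \in \mathbb{R}_{>0}$ and let $M_\alpha = \{f(\alpha) \mid f(x) \in \mathbb{N}_0[x,x^{-1}]\}$, regarded as an additive monoid. The following statements are equivalent: (a) $1 \in \mathcal{A}(M_\alpha)$; (b) $\mathcal{A}(M_\alpha) = \{\alpha^n \mid n \in \mathbb{Z}\}$; (c) $M_\alpha$ is atomic. Moreover, suppose $\alpha \in \mathbb{R}_{>0} \setminus \{1\}$ is an algebraic number. If $M_\alpha$ is atomic, then neither of the two components in the minimal pair of $\alpha$ is a monic monomial (i.e., neither equals $x^n$ for some $n \in \mathbb{N}_0$).
   Context: $\mathbb{N}_0[x,x^{-1}]$ denotes the semiring of Laurent polynomials with coefficients in the nonnegative integers $\mathbb{N}_0$. For a (cancellative, commutative, reduced, additively written) monoid $M$, a nonzero element $a$ is an atom if $a = x+y$ with $x,y\in M$ implies $x=0$ or $y=0$; $\mathcal{A}(M)$ is the set of atoms, and $M$ is atomic if every nonzero element is a sum of atoms. For a monic polynomial $f(x) \in \mathbb{Q}[x]$, let $\ell$ be the smallest positive integer with $\ell f(x) \in \mathbb{Z}[x]$; the minimal pair of $f$ is the unique pair $(p(x),q(x))$ with $p(x),q(x) \in \mathbb{N}_0[x]$, $\ell f(x) = p(x) - q(x)$, and $p$ and $q$ having no monomials of the same degree in common. The minimal pair of a real algebraic number $\alpha$ is the minimal pair of its minimal polynomial over $\mathbb{Q}$. *)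

From HB Require Import structures.
From mathcomp Require Import all_boot all_order all_algebra.
From mathcomp Require Import reals.
Set Implicit Arguments. Unset Strict Implicit. Unset Printing Implicit Defensive.
Import Order.TTheory GRing.Theory Num.Theory.
Local Open Scope ring_scope.

Section Defs.
Variable R : realType.

(* Evaluation at [a] of the Laurent polynomial
   x^{-k} * (c_0 + c_1 x + ... + c_{m-1} x^{m-1})  with c_i in N_0.
   Every element of N_0[x,x^{-1}] has this form. *)
Definition laurent_eval (a : R) (k : nat) (c : seq nat) : R :=
  \sum_(i < size c) (nth 0%N c i)%:R * a ^ (i%:Z - k%:Z).

Definition inM (a : R) (x : R) : Prop :=
  exists (k : nat) (c : seq nat), x = laurent_eval a k c.

Definition isAtom (a : R) (x : R) : Prop :=
  [/\ inM a x, x <> 0 &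
      forall y z, inM a y -> inM a z -> x = y + z -> y = 0 \/ z = 0].

Definition atomic (a : R) : Prop :=
  forall x, inM a x -> x <> 0 ->
    exists s : seq R, (forall y, y \in s -> isAtom a y) /\ x = \sum_(y <- s) y.

Definition algebraic (a : R) : Prop :=
  exists f : {poly rat}, f != 0 /\ root (map_poly ratr f) a.

Definition is_minpoly (a : R) (f : {poly rat}) : Prop :=
  [/\ f \is monic, root (map_poly ratr f) a &
      forall g : {poly rat}, g != 0 -> root (map_poly ratr g) a ->
        (size f <= size g)%N].

Definition is_denom (f : {poly rat}) (l : nat) : Prop :=
  [/\ (0 < l)%N, (l%:R *: f) \is a polyOver Num.int &
      forall m : nat, (0 < m)%N -> (m%:R *: f) \is a polyOver Num.int ->
        (l <= m)%N].

(* (p, q) is the minimal pair of f: p, q in N_0[x] (integer polynomials with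
   nonnegative coefficients), l f = p - q, no common monomial degree *)
Definition is_minimal_pair (f : {poly rat}) (p q : {poly int}) : Prop :=
  exists l : nat,
    [/\ is_denom f l,
        (forall i, 0 <= p`_i) /\ (forall i, 0 <= q`_i),
        l%:R *: f = map_poly intr (p - q) &
        forall i, p`_i = 0 \/ q`_i = 0].

End Defs.

From HB Require Import structures.
From mathcomp Require Import all_boot all_order all_algebra.
From mathcomp Require Import reals.
From mathcomp Require Import ring.
Set Implicit Arguments. Unset Strict Implicit. Unset Printing Implicit Defensive.
Import Order.TTheory GRing.Theory Num.Theory.
Local Open Scope ring_scope.

(* Every nonzero element of M_a splits as a^j + y with y in M_a, for each
   monomial a^j occurring in it; hence an atom is equal to each of its
   monomials, so every atom is a power of a.  Multiplication by a^m is an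
   automorphism of M_a, so the powers of a are either all atoms or none is,
   and in the first case every f(a) is visibly a sum of atoms.  Conversely,
   if M_a is atomic, writing 1 as a sum of atoms a^n shows that a^n, hence 1,
   is an atom.  For the minimal pair (p, q): p(a) = q(a), and if p = x^n,
   then 1 = a^-n q(a) is a sum of powers a^(i-n) with q_i > 0 and i <> n;
   as 1 is an atom each of these powers must equal 1, which forces i = n
   when 0 < a <> 1. *)

Section LaurentMonoid.
Variables (R : realType) (a : R).
Implicit Types (x y : R) (c : seq nat).

Definition laurent_evalz (z : int) c : R :=
  \sum_(i < size c) (nth 0%N c i)%:R * a ^ (i%:Z + z).

Lemma intSD (i : nat) (z : int) : i.+1%:Z + z = i%:Z + (z + 1).
Proof. by rewrite intS; ring. Qed.

Lemma laurent_evalE k c : laurent_eval a k c = laurent_evalz (- k%:Z) c.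
Proof. by []. Qed.

Lemma laurent_evalz_nil z : laurent_evalz z [::] = 0.
Proof. by rewrite /laurent_evalz big_ord0. Qed.

Lemma laurent_evalz_cons z n c :
  laurent_evalz z (n :: c) = n%:R * a ^ z + laurent_evalz (z + 1) c.
Proof.
rewrite /laurent_evalz /= big_ord_recl /= add0r; congr (_ + _).
by apply: eq_bigr => i _; rewrite intSD.
Qed.

Lemma laurent_evalz_nseq0 z m c :
  laurent_evalz z (nseq m 0%N ++ c) = laurent_evalz (z + m%:Z) c.
Proof.
elim: m z => [|m IHm] z /=; first by rewrite addr0.
by rewrite laurent_evalz_cons mul0r add0r IHm intS addrA.
Qed.

Lemma laurent_evalz_exp z : laurent_evalz z [:: 1%N] = a ^ z.
Proof. by rewrite laurent_evalz_cons laurent_evalz_nil mul1r addr0. Qed.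

Lemma laurent_evalz_monomialD z c j : (0 < nth 0%N c j)%N ->
  laurent_evalz z c =
    a ^ (j%:Z + z) + laurent_evalz z (set_nth 0%N c j (nth 0%N c j).-1).
Proof.
elim: c z j => [|n c IHc] z [|j] //= cj_gt0; rewrite !laurent_evalz_cons.
  by rewrite add0r -{1}(prednK cj_gt0) mulrSr; ring.
by rewrite (IHc _ _ cj_gt0) intSD; ring.
Qed.

Lemma laurent_evalz_neq0 z c :
  laurent_evalz z c != 0 -> exists j, (0 < nth 0%N c j)%N.
Proof.
elim: c z => [|[|n] c IHc] z; first by rewrite laurent_evalz_nil eqxx.
  rewrite laurent_evalz_cons mul0r add0r => /IHc[j cj_gt0].
  by exists j.+1.
by exists 0%N.
Qed.

Lemma inME x : inM a x <-> exists z c, x = laurent_evalz z c.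
Proof.
split=> [[k [c ->]]|[[m|m] [c ->]]]; first by exists (- k%:Z), c.
  by exists 0%N, (nseq m 0%N ++ c); rewrite laurent_evalE oppr0 laurent_evalz_nseq0 add0r.
by exists m.+1, c; rewrite laurent_evalE NegzE.
Qed.

Lemma inM_exp z : inM a (a ^ z).
Proof. by apply/inME; exists z, [:: 1%N]; rewrite laurent_evalz_exp. Qed.

Hypothesis a_neq0 : a != 0.

Lemma laurent_evalz_mulexp m z c :
  a ^ m * laurent_evalz z c = laurent_evalz (z + m) c.
Proof.
rewrite /laurent_evalz mulr_sumr; apply: eq_bigr => i _.
by rewrite mulrCA -expfzDr // addrCA [m + z]addrC.
Qed.

Lemma inM_mulexp m x : inM a x -> inM a (a ^ m * x).
Proof.
case/inME=> z [c ->]; apply/inME; exists (z + m), c.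
exact: laurent_evalz_mulexp.
Qed.

Lemma atom_laurent_evalz z c j : isAtom a (laurent_evalz z c) ->
  (0 < nth 0%N c j)%N -> laurent_evalz z c = a ^ (j%:Z + z).
Proof.
move=> [_ _ atomP] cj_gt0; have splitE := laurent_evalz_monomialD z cj_gt0.
have rest_in : inM a (laurent_evalz z (set_nth 0%N c j (nth 0%N c j).-1)).
  by apply/inME; do 2 eexists.
have [/eqP|rest0] := atomP _ _ (inM_exp _) rest_in splitE.
  by rewrite (negbTE (expfz_neq0 _ a_neq0)).
by rewrite splitE rest0 addr0.
Qed.

Lemma atom_exp x : isAtom a x -> exists n : int, x = a ^ n.
Proof.
move=> x_atom; have [/inME[z [c xE]] /eqP x_neq0 _] := x_atom.
rewrite xE in x_neq0 x_atom; have [j cj_gt0] := laurent_evalz_neq0 x_neq0.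
by exists (j%:Z + z); rewrite xE (atom_laurent_evalz x_atom cj_gt0).
Qed.

Lemma atom_mulexp m x : isAtom a x -> isAtom a (a ^ m * x).
Proof.
move=> [x_in /eqP x_neq0 atomP]; split; first exact: inM_mulexp.
  by apply/eqP; rewrite mulf_neq0 ?expfz_neq0.
move=> y w y_in w_in xE.
have unscale k : a ^ (- m) * (a ^ m * k) = k by rewrite mulrA -expfzDr // addNr mul1r.
have [] := atomP _ _ (inM_mulexp (- m) y_in) (inM_mulexp (- m) w_in).
- by rewrite -mulrDr -xE unscale.
- by move/eqP; rewrite mulf_eq0 (negbTE (expfz_neq0 _ a_neq0)) => /eqP; left.
- by move/eqP; rewrite mulf_eq0 (negbTE (expfz_neq0 _ a_neq0)) => /eqP; right.
Qed.

Lemma atom1_exp n : isAtom a 1 -> isAtom a (a ^ n).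
Proof. by rewrite -[a ^ n]mulr1; apply: atom_mulexp. Qed.

Lemma atom1_atomsE : isAtom a 1 ->
  forall x, isAtom a x <-> exists n : int, x = a ^ n.
Proof. by move=> a1 x; split=> [|[n ->]]; [apply: atom_exp | apply: atom1_exp]. Qed.

Lemma atom1_atomic : isAtom a 1 -> atomic a.
Proof.
move=> a1 x /inME[z [c ->]] _; elim: c z => [|n c IHc] z.
  by exists [::]; rewrite laurent_evalz_nil big_nil.
have [s [s_atoms sE]] := IHc (z + 1).
exists (nseq n (a ^ z) ++ s); split.
  by move=> y; rewrite mem_cat => /orP[/nseqP[-> _]|/s_atoms //]; apply: atom1_exp.
by rewrite laurent_evalz_cons sE big_cat /= big_nseq iter_addr addr0 mulr_natl.
Qed.

Lemma atomic_atom1 : atomic a -> isAtom a 1.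
Proof.
move=> a_atomic; have one_neq0 : (1 : R) <> 0 by apply/eqP/oner_neq0.
have [] := a_atomic 1 (inM_exp 0) one_neq0.
case=> [|y s] [s_atoms sum1]; first by move: sum1; rewrite big_nil.
have y_atom := s_atoms y (mem_head _ _); have [n yE] := atom_exp y_atom.
by have := atom_mulexp (- n) y_atom; rewrite yE -expfzDr // addNr.
Qed.

End LaurentMonoid.

Section AtomOne.
Variables (R : realType) (a : R).
Hypotheses (a_gt0 : 0 < a) (a_neq1 : a != 1) (a1 : isAtom a 1).
Let a_neq0 : a != 0 := lt0r_neq0 a_gt0.

Lemma atom1_laurent_evalz_eq1 z c j : laurent_evalz a z c = 1 ->
  (0 < nth 0%N c j)%N -> j%:Z + z = 0.
Proof.
move=> c1 cj_gt0; have c_atom : isAtom a (laurent_evalz a z c) by rewrite c1.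
have /eqP := atom_laurent_evalz a_neq0 c_atom cj_gt0.
by rewrite c1 eq_sym pexprz_eq1 ?ltW // (negbTE a_neq1) orbF => /eqP.
Qed.

Lemma atom1_laurent_evalz_neq_exp c n :
  nth 0%N c n = 0%N -> laurent_evalz a 0 c != a ^+ n.
Proof.
move=> cn0; apply/eqP => cE.
have c1 : laurent_evalz a (- n%:Z) c = 1.
  rewrite -[- _]add0r -laurent_evalz_mulexp // cE exprnP.
  by rewrite -expfzDr // addNr.
have [j cj_gt0] : exists j, (0 < nth 0%N c j)%N.
  by apply: (@laurent_evalz_neq0 _ a (- n%:Z)); rewrite c1 oner_neq0.
move/eqP: (atom1_laurent_evalz_eq1 c1 cj_gt0).
by rewrite subr_eq0 eqz_nat => /eqP jn; rewrite jn cn0 in cj_gt0.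
Qed.

Lemma horner_nonneg_laurent_evalz (q : {poly int}) : (forall i, 0 <= q`_i) ->
  (map_poly intr q).[a] = laurent_evalz a 0 [seq `|k|%N | k <- q].
Proof.
move=> q_ge0; have size_q := size_map_inj_poly (@intr_inj R) (mulr0z 1) q.
rewrite (horner_coef_wide _ (eq_leq size_q)) /laurent_evalz size_map.
apply: eq_bigr => i _; rewrite coef_map (nth_map 0) //=.
by rewrite natr_absz ger0_norm // addr0 exprnP.
Qed.

Lemma atom1_monomial_pair (p q : {poly int}) n :
  (forall i, 0 <= q`_i) -> (forall i, p`_i = 0 \/ q`_i = 0) ->
  (map_poly intr p).[a] = (map_poly intr q).[a] :> R -> p != 'X^n.
Proof.
move=> q_ge0 pq_disj pqE; apply/eqP => pE.
have qn0 : q`_n = 0 by case: (pq_disj n); rewrite // pE coefXn eqxx.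
have cn0 : nth 0%N [seq `|k|%N | k <- q] n = 0%N.
  have [n_lt|n_ge] := ltnP n (size q); first by rewrite (nth_map 0) // qn0.
  by rewrite nth_default // size_map.
have := atom1_laurent_evalz_neq_exp cn0.
by rewrite -horner_nonneg_laurent_evalz // -pqE pE map_polyXn hornerXn eqxx.
Qed.

End AtomOne.

Lemma minimal_pair_hornerE (R : realType) (a : R) f (p q : {poly int}) :
  is_minpoly a f -> is_minimal_pair f p q ->
  (map_poly intr p).[a] = (map_poly intr q).[a] :> R.
Proof.
move=> [_ fa0 _] [l [_ _ lfE _]]; apply/eqP; rewrite -subr_eq0.
have : (map_poly ratr (l%:R *: f)).[a] = 0 :> R.
  by rewrite map_polyZ hornerZ (rootP fa0) mulr0.
by rewrite lfE -map_poly_comp (eq_map_poly (ratr_int R)) rmorphB hornerD hornerN => ->.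
Qed.

Theorem theorem3p1 (R : realType) :
  (forall alpha : R, 0 < alpha ->
     (isAtom alpha 1 <-> (forall x, isAtom alpha x <-> exists n : int, x = alpha ^ n))
     /\ ((forall x, isAtom alpha x <-> exists n : int, x = alpha ^ n) <-> atomic alpha))
  /\
  (forall alpha : R, 0 < alpha -> alpha != 1 -> algebraic alpha ->
     atomic alpha ->
     forall (f : {poly rat}) (p q : {poly int}),
       is_minpoly alpha f -> is_minimal_pair f p q ->
       forall n : nat, p != 'X^n /\ q != 'X^n).
Proof.
split=> [a a_gt0|a a_gt0 a_neq1 _ a_atomic f p q fa pq n].
  have a_neq0 := lt0r_neq0 a_gt0.
  have atomsE1 : (forall x, isAtom a x <-> exists n : int, x = a ^ n) -> isAtom a 1.
    by move=> atomsE; apply/atomsE; exists 0.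
  split; split; [exact: atom1_atomsE | exact: atomsE1 | |].
    by move/atomsE1; apply: atom1_atomic.
  by move/(atomic_atom1 a_neq0); apply: atom1_atomsE.
have a1 := atomic_atom1 (lt0r_neq0 a_gt0) a_atomic.
have pqE := minimal_pair_hornerE fa pq.
have [_ [_ [p_ge0 q_ge0] _ pq_disj]] := pq.
split; first exact: atom1_monomial_pair a_gt0 a_neq1 a1 _ _ _ q_ge0 pq_disj pqE.
apply: atom1_monomial_pair a_gt0 a_neq1 a1 _ _ _ p_ge0 _ (esym pqE) => i.
exact/or_comm/pq_disj.
Qed.
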